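(* Let $X$ be a finite set, let $N$ be a rooted phylogenetic network on $X$, and let $\widetilde{N}$ be the normalisation of $N$. Suppose that $u,v$ are vertices of $\widetilde{N}$ and that there is a directed path $p$ from $u$ to $v$ in $\widetilde{N}$. Then there is a directed path in $N$ from $u$ to $v$ that contains every vertex of $p$ (and possibly additional vertices).
   Context: A rooted phylogenetic network on a finite set $X$ is a finite acyclic directed graph $N$ with a single vertex of in-degree $0$ (the root $\rho$), all other vertices being of one of three types: (1) in-degree $1$ and out-degree $0$ (the leaves, which form exactly the set $X$); (2) in-degree $1$ and out-degree at least $2$; (3) out-degree $1$ and in-degree at least $2$ (reticulate vertices). A vertex $v$ of $N$ is visible if there is a leaf $x\in X$ such that every directed path from $\rho$ to $x$ passes through $v$; the root and all leaves are visible. Let $V_{\rm vis}(N)$ be the set of visible vertices. Define the directed graph ${\rm Cov}(N)$ with vertex set $V_{\rm vis}(N)$ as follows: for each pair $u\neq v$ of visible vertices such that $N$ has a directed path from $u$ to $v$, put an arc $(u,v)$; then delete every arc $(u,v)$ for which there is also a directed path of length at least $2$ from $u$ to $v$ in this graph (so ${\rm Cov}(N)$ is the Hasse diagram of the reachability partial order on $V_{\rm vis}(N)$). A vertex is subdividing if its in-degree and out-degree are both $1$. The normalisation $\widetilde{N}$ of $N$ is the directed graph obtained from ${\rm Cov}(N)$ by suppressing every subdividing vertex (i.e. replacing each maximal path whose interior vertices are subdividing by a single arc between its endpoints). *)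

From mathcomp Require Import all_boot.
From Stdlib Require Import Relations.

Set Implicit Arguments.
Unset Strict Implicit.
Unset Printing Implicit Defensive.

Section Network.
Variables (V : finType) (E : rel V).

(* A finite digraph: vertex set V, arc set E (no parallel arcs). *)
Definition indeg (v : V) : nat := #|[set w | E w v]|.
Definition outdeg (v : V) : nat := #|[set w | E v w]|.

Definition phylo_network (rho : V) (X : {set V}) : Prop :=
  (forall x y, E x y -> ~~ connect E y x) /\
  indeg rho = 0 /\
  (forall v, v != rho ->
     [|| (indeg v == 1) && (outdeg v == 0),
         (indeg v == 1) && (2 <= outdeg v) |
         (outdeg v == 1) && (2 <= indeg v)]) /\
  (forall v, (v \in X) = [&& v != rho, indeg v == 1 & outdeg v == 0]).

Definition visible (rho : V) (X : {set V}) (v : V) : Prop :=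
  exists2 x, x \in X &
    forall s, path E rho s -> last rho s = x -> v \in rho :: s.

(* Prop-valued directed paths for derived (Prop) relations. *)
Fixpoint ppath (R : V -> V -> Prop) (x : V) (s : seq V) : Prop :=
  match s with
  | [::] => True
  | y :: s' => R x y /\ ppath R y s'
  end.

Definition visreach (rho : V) (X : {set V}) (u v : V) : Prop :=
  [/\ visible rho X u, visible rho X v, u <> v & connect E u v].

(* Cov(N): delete every arc (u,v) with a path of length >= 2 from u to v. *)
Definition covR (rho : V) (X : {set V}) (u v : V) : Prop :=
  visreach rho X u v /\
  ~ (exists w, visreach rho X u w /\ clos_trans V (visreach rho X) w v).

Definition cov_subdividing (rho : V) (X : {set V}) (v : V) : Prop :=
  (exists! w, covR rho X w v) /\ (exists! w, covR rho X v w).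

Definition norm_vertex (rho : V) (X : {set V}) (v : V) : Prop :=
  visible rho X v /\ ~ cov_subdividing rho X v.

(* Arcs of the normalisation: maximal paths of Cov(N) whose interior vertices
   are subdividing are replaced by a single arc between their endpoints. *)
Definition normR (rho : V) (X : {set V}) (a b : V) : Prop :=
  [/\ norm_vertex rho X a, norm_vertex rho X b &
      exists s, ppath (covR rho X) a (rcons s b) /\
                (forall w, w \in s -> cov_subdividing rho X w)].

End Network.

(** Every arc of Cov(N), hence every arc of the normalisation, joins two
    vertices connected by a directed path of N; replacing each arc of [p] by
    such a path yields a path of N through all vertices of [p]. *)
From mathcomp Require Import all_boot.

Set Implicit Arguments.
Unset Strict Implicit.
Unset Printing Implicit Defensive.

Section PathRefinement.
Variables (V : finType) (E : rel V) (R : V -> V -> Prop).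
Hypothesis R_connect : forall a b, R a b -> connect E a b.

Lemma ppath_connect (a : V) (s : seq V) : ppath R a s -> connect E a (last a s).
Proof.
elim: s a => [|b s IHs] a /=; first by rewrite connect0.
by case=> /R_connect Eab /IHs; apply: connect_trans.
Qed.

Lemma ppath_refine (u : V) (s : seq V) : ppath R u s ->
  exists t, [/\ path E u t, last u t = last u s & {subset u :: s <= u :: t}].
Proof.
elim: s u => [|b s IHs] u /=; first by exists [::]; split.
case=> /R_connect /connectP[p Ep ->] /IHs[t [Et lastt subt]].
exists (p ++ t); split; first by rewrite cat_path Ep.
  by rewrite last_cat.
move=> x /predU1P[->|/subt]; first exact: mem_head.
rewrite -cat_cons mem_cat => /predU1P[->|xt]; first by rewrite mem_last.
by apply/orP; right.
Qed.

End PathRefinement.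

Lemma covR_connect (V : finType) (E : rel V) (rho : V) (X : {set V}) (a b : V) :
  covR E rho X a b -> connect E a b.
Proof. by case=> -[]. Qed.

Lemma normR_connect (V : finType) (E : rel V) (rho : V) (X : {set V}) (a b : V) :
  normR E rho X a b -> connect E a b.
Proof.
case=> _ _ [s [covs _]].
by move/ppath_connect: covs; rewrite last_rcons; apply; apply: covR_connect.
Qed.

Theorem lemma1 (V : finType) (E : rel V) (rho : V) (X : {set V})
  (HN : phylo_network E rho X)
  (u v : V) (s : seq V)
  (Hu : norm_vertex E rho X u) (Hv : norm_vertex E rho X v)
  (Hp : ppath (normR E rho X) u s) (Hlast : last u s = v) :
  exists t : seq V,
    [/\ path E u t, last u t = v & {subset u :: s <= u :: t}].
Proof.
rewrite -Hlast; exact: ppath_refine (@normR_connect _ _ _ _) _ _ Hp.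
Qed.
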